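(* Let $N\ge1$ be an integer and $\beta,\gamma,\xi,\eta,D,R>0$. Define, for $z>0$, $$\bar C(z)=\frac{\gamma\xi R^2\,e^{-\frac{R^2}{4zD}-\eta z}}{8z^2D^2},\qquad g(t)=N\int_0^t\bar C(t-\tau)\,d\tau,$$ and consider the planar linear nonautonomous system in $\mathbf{y}=(V,X)\in\mathbb{R}^2$ $$\dot V=-\beta V-g(t)X,\qquad \dot X=V.$$ Fix $\bar t>0$. Then the system admits a Lyapunov function $U(t,\mathbf{y})$ and positive constants $k_1,k_2,k_3$ such that, for all $t\ge\bar t$ and all $\mathbf{y}\in\mathbb{R}^2$, (a) $k_2\|\mathbf{y}\|^2\le U(t,\mathbf{y})\le k_1\|\mathbf{y}\|^2$; (b) $\dot U(t,\mathbf{y})=\frac{\partial U}{\partial t}+\frac{\partial U}{\partial V}\dot V+\frac{\partial U}{\partial X}\dot X\le -k_3\|\mathbf{y}\|^2$, where $\dot V,\dot X$ are given by the system.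
   Context: This planar system is the linearization, written in centre-of-mass variables for each particle and each coordinate, of a hybrid model of $N$ particles in $\mathbb{R}^2$ with Cucker–Smale alignment (strength $\beta$) and chemotaxis towards a signal diffusing with coefficient $D$, degrading at rate $\eta$, produced at rate $\xi$ on discs of radius $R$, with chemotactic sensitivity $\gamma$. $\|\cdot\|$ is the Euclidean norm. *)

From Stdlib Require Import Reals Lra.
From Coquelicot Require Import Coquelicot.
Open Scope R_scope.

(* Cbar(z) = gamma xi Rd^2 exp(-Rd^2/(4 z D) - eta z) / (8 z^2 D^2) for z > 0;
   extended by 0 for z <= 0 (its continuous extension at 0). *)
Definition Cbar (gamma xi eta D Rd : R) (z : R) : R :=
  if Rlt_dec 0 z then
    gamma * xi * Rd ^ 2 * exp (- Rd ^ 2 / (4 * z * D) - eta * z) / (8 * z ^ 2 * D ^ 2)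
  else 0.

Definition gfun (N : nat) (gamma xi eta D Rd : R) (t : R) : R :=
  INR N * RInt (fun tau => Cbar gamma xi eta D Rd (t - tau)) 0 t.

(* Take U(t, V, X) = V^2 / g(t) + X^2 + eps V X.  Since C >= 0, g is nondecreasing, so the
   term -g'/g^2 V^2 of the orbital derivative has a good sign; and since C(z) <= c exp(-eta z),
   g stays between g(tbar) > 0 and N c / eta on [tbar, oo).  With g confined to such a band,
   the cross term eps V X both keeps U equivalent to V^2 + X^2 and, for eps small, makes the
   orbital derivative negative definite in (V, X) uniformly in t. *)

From Stdlib Require Import Reals Lra.
From Coquelicot Require Import Coquelicot.
Open Scope R_scope.

Lemma pow_le_fact_exp (n : nat) (u : R) : 0 <= u -> u ^ n <= INR (Factorial.fact n) * exp u.
Proof.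
  intros Hu.
  assert (Hfact : 0 < INR (Factorial.fact n)) by apply INR_fact_lt_0.
  assert (Hterm : u ^ n / INR (Factorial.fact n) <= exp u).
  { eapply Rle_trans; [|apply (exp_ge_taylor u n Hu)].
    destruct n as [|m]; [simpl; lra|].
    rewrite tech5.
    assert (0 <= sum_f_R0 (fun k => u ^ k / INR (Factorial.fact k)) m); [|lra].
    apply cond_pos_sum; intros k.
    apply Rdiv_le_0_compat; [apply pow_le; lra | apply INR_fact_lt_0]. }
  apply (Rmult_le_compat_l (INR (Factorial.fact n))) in Hterm; [|lra].
  replace (INR (Factorial.fact n) * (u ^ n / INR (Factorial.fact n))) with (u ^ n) in Hterm by (field; lra).
  exact Hterm.
Qed.

Lemma exp_neg_div_le (n : nat) (a z : R) : 0 < a -> 0 < z ->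
  exp (- (a / z)) <= INR (Factorial.fact n) * (z / a) ^ n.
Proof.
  intros Ha Hz.
  assert (Hu : 0 < a / z) by (apply Rdiv_lt_0_compat; lra).
  pose proof (pow_le_fact_exp n (a / z) (Rlt_le _ _ Hu)) as Hpow.
  assert (Hexp : 0 < exp (a / z)) by apply exp_pos.
  assert (Hzpow : 0 < (z / a) ^ n) by (apply pow_lt, Rdiv_lt_0_compat; lra).
  assert (Hone : (a / z) ^ n * (z / a) ^ n = 1).
  { rewrite <- Rpow_mult_distr. replace (a / z * (z / a)) with 1 by (field; lra). apply pow1. }
  rewrite exp_Ropp.
  apply (Rmult_le_reg_l (exp (a / z))); [exact Hexp|].
  rewrite Rinv_r by lra.
  rewrite <- Hone. nra.
Qed.

Lemma continuous_at_0_of_linear_bound (f : R -> R) (K : R) :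
  f 0 = 0 -> (forall z, Rabs (f z) <= K * Rabs z) -> continuous f 0.
Proof.
  intros Hf0 Hlin.
  apply continuity_pt_filterlim.
  intros eps Heps.
  assert (HK : 0 <= K) by (pose proof (Hlin 1); rewrite Rabs_R1 in *; pose proof (Rabs_pos (f 1)); lra).
  exists (eps / (K + 1)). split; [apply Rdiv_lt_0_compat; lra|].
  intros z [_ Hz]. simpl in *. unfold R_dist in *. rewrite Hf0, Rminus_0_r in *.
  eapply Rle_lt_trans; [apply Hlin|].
  apply Rle_lt_trans with ((K + 1) * Rabs z); [pose proof (Rabs_pos z); nra|].
  apply (Rmult_lt_compat_l (K + 1)) in Hz; [|lra].
  replace ((K + 1) * (eps / (K + 1))) with eps in Hz by (field; lra). exact Hz.
Qed.

Lemma quadratic_form_bounds (p p0 m eps V X : R) :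
  0 < m <= 1 -> m <= p <= p0 -> 0 < eps <= m ->
  m / 2 * (V ^ 2 + X ^ 2) <= V ^ 2 * p + X ^ 2 + eps * V * X <= (p0 + 1 + eps) * (V ^ 2 + X ^ 2).
Proof.
  intros Hm Hp Heps.
  assert (HV : 0 <= V ^ 2) by apply pow2_ge_0. assert (HX : 0 <= X ^ 2) by apply pow2_ge_0.
  assert (Hcross_lo : - (eps / 2) * (V ^ 2 + X ^ 2) <= eps * V * X).
  { assert (0 <= eps / 2 * (V + X) ^ 2) by (apply Rmult_le_pos; [lra | apply pow2_ge_0]). nra. }
  assert (Hcross_hi : eps * V * X <= eps / 2 * (V ^ 2 + X ^ 2)).
  { assert (0 <= eps / 2 * (V - X) ^ 2) by (apply Rmult_le_pos; [lra | apply pow2_ge_0]). nra. }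
  split; nra.
Qed.

Lemma orbital_derivative_le (g g0 g1 d beta eps k3 V X : R) :
  0 < g0 <= g -> g <= g1 -> 0 <= d -> 0 < beta -> 0 < eps ->
  eps * g1 <= beta -> eps * beta * g1 <= g0 -> k3 <= beta / (2 * g1) -> k3 <= eps * g0 / 2 ->
  - d / g ^ 2 * V ^ 2 + (2 * V / g + eps * X) * (- beta * V - g * X) + (2 * X + eps * V) * V
    <= - k3 * (V ^ 2 + X ^ 2).
Proof.
  intros Hg0 Hg1 Hd Hbeta Heps Heps_g1 Heps_g0 Hk3V Hk3X.
  assert (HV : 0 <= V ^ 2) by apply pow2_ge_0. assert (HX : 0 <= X ^ 2) by apply pow2_ge_0.
  assert (Hexpand :
    - d / g ^ 2 * V ^ 2 + (2 * V / g + eps * X) * (- beta * V - g * X) + (2 * X + eps * V) * V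
    = - (d / g ^ 2 * V ^ 2) - (2 * (beta / g) - eps) * V ^ 2 - eps * beta * V * X - eps * g * X ^ 2)
    by (field; lra).
  assert (Hdamp : 0 <= d / g ^ 2 * V ^ 2).
  { apply Rmult_le_pos; [apply Rdiv_le_0_compat; [lra | apply pow_lt; lra] | exact HV]. }
  assert (Hbeta_g : beta / g1 <= beta / g).
  { apply Rmult_le_compat_l; [lra | apply Rinv_le_contravar; lra]. }
  assert (Heps_le : eps <= beta / g1).
  { apply (Rmult_le_reg_r g1); [lra|]. unfold Rdiv. rewrite Rmult_assoc, Rinv_l; lra. }
  (* AM-GM, weighted so that the [X ^ 2] part is absorbed by [eps * g0 / 2 * X ^ 2] *)
  assert (Hcross : - (eps * beta * V * X) <= beta / (2 * g1) * V ^ 2 + eps * g0 / 2 * X ^ 2).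
  { assert (Hsq : 0 <= beta * g1 / 2 * (V / g1 + eps * X) ^ 2)
      by (apply Rmult_le_pos; [nra | apply pow2_ge_0]).
    replace (beta * g1 / 2 * (V / g1 + eps * X) ^ 2)
      with (beta / (2 * g1) * V ^ 2 + eps * beta * V * X + eps * (eps * beta * g1) / 2 * X ^ 2)
      in Hsq by (field; lra).
    assert (eps * (eps * beta * g1) / 2 * X ^ 2 <= eps * g0 / 2 * X ^ 2).
    { apply Rmult_le_compat_r; [exact HX|]. nra. }
    lra. }
  rewrite Hexpand.
  assert (beta / g1 * V ^ 2 <= (2 * (beta / g) - eps) * V ^ 2) by (apply Rmult_le_compat_r; lra).
  assert (eps * g0 * X ^ 2 <= eps * g * X ^ 2) by (apply Rmult_le_compat_r; nra).
  replace (beta / g1) with (2 * (beta / (2 * g1))) in * by (field; lra).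
  nra.
Qed.

Definition has_strict_lyapunov (beta : R) (g : R -> R) (tbar : R) : Prop :=
  exists (U Ut UV UX : R -> R -> R -> R) (k1 k2 k3 : R),
    0 < k1 /\ 0 < k2 /\ 0 < k3 /\
    (forall t V X, tbar <= t ->
       is_derive (fun s => U s V X) t (Ut t V X) /\
       is_derive (fun v => U t v X) V (UV t V X) /\
       is_derive (fun x => U t V x) X (UX t V X)) /\
    (forall t V X, tbar <= t ->
       k2 * (V ^ 2 + X ^ 2) <= U t V X <= k1 * (V ^ 2 + X ^ 2)) /\
    (forall t V X, tbar <= t ->
       Ut t V X + UV t V X * (- beta * V - g t * X) + UX t V X * V <= - k3 * (V ^ 2 + X ^ 2)).

Section Planar.

Variables (beta tbar g0 g1 : R) (g dg : R -> R).
Hypotheses (beta_pos : 0 < beta) (g0_pos : 0 < g0)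
  (g_derive : forall t, tbar <= t -> is_derive g t (dg t))
  (dg_nonneg : forall t, tbar <= t -> 0 <= dg t)
  (g_bounds : forall t, tbar <= t -> g0 <= g t <= g1).

Lemma is_derive_lyapunov_t (eps t V X : R) : tbar <= t ->
  is_derive (fun s => V ^ 2 / g s + X ^ 2 + eps * V * X) t (- dg t / g t ^ 2 * V ^ 2).
Proof.
  intros Ht.
  pose proof (g_derive t Ht) as Hg. pose proof (g_bounds t Ht).
  auto_derive.
  - split; [exists (dg t); exact Hg | split; [lra | exact I]].
  - replace (Derive (fun x : R => g x) t) with (dg t) by (symmetry; apply is_derive_unique, Hg).
    field. lra.
Qed.

Lemma planar_has_strict_lyapunov : has_strict_lyapunov beta g tbar.
Proof.
  assert (Hg01 : g0 <= g1) by (destruct (g_bounds tbar (Rle_refl _)); lra).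
  assert (Hg1 : 0 < g1) by lra.
  set (m := Rmin (/ g1) 1).
  assert (Hm : 0 < m) by (apply Rmin_pos; [apply Rinv_0_lt_compat|]; lra).
  set (eps := Rmin (Rmin (beta / g1) (g0 / (beta * g1))) m).
  assert (Heps : 0 < eps).
  { apply Rmin_pos; [apply Rmin_pos; apply Rdiv_lt_0_compat | exact Hm]; nra. }
  assert (Heps_g1 : eps * g1 <= beta).
  { assert (eps <= beta / g1) by (eapply Rle_trans; [apply Rmin_l | apply Rmin_l]).
    apply (Rmult_le_compat_r g1) in H; [|lra].
    unfold Rdiv in H. rewrite Rmult_assoc, Rinv_l in H; lra. }
  assert (Heps_g0 : eps * beta * g1 <= g0).
  { assert (eps <= g0 / (beta * g1)) by (eapply Rle_trans; [apply Rmin_l | apply Rmin_r]).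
    apply (Rmult_le_compat_r (beta * g1)) in H; [|nra].
    replace (g0 / (beta * g1) * (beta * g1)) with g0 in H by (field; lra). lra. }
  set (k3 := Rmin (beta / (2 * g1)) (eps * g0 / 2)).
  exists (fun t V X => V ^ 2 / g t + X ^ 2 + eps * V * X),
         (fun t V X => - dg t / g t ^ 2 * V ^ 2),
         (fun t V X => 2 * V / g t + eps * X),
         (fun t V X => 2 * X + eps * V),
         (/ g0 + 1 + eps), (m / 2), k3.
  split; [pose proof (Rinv_0_lt_compat _ g0_pos); lra|].
  split; [lra|].
  split; [apply Rmin_pos; apply Rdiv_lt_0_compat; nra|].
  split; [|split]; intros t V X Ht; pose proof (g_bounds t Ht).
  - split; [|split].
    + exact (is_derive_lyapunov_t eps t V X Ht).
    + auto_derive; [lra | field; lra].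
    + auto_derive; [exact I | ring].
  - unfold Rdiv. apply quadratic_form_bounds.
    + split; [exact Hm | apply Rmin_r].
    + split; [|apply Rinv_le_contravar; lra].
      eapply Rle_trans; [apply Rmin_l | apply Rinv_le_contravar; lra].
    + split; [exact Heps | apply Rmin_r].
  - apply orbital_derivative_le with g0 g1; try lra;
      [apply dg_nonneg, Ht | apply Rmin_l | apply Rmin_r].
Qed.

End Planar.

Section Kernel.

Variables gamma xi eta D Rd : R.
Hypotheses (gamma_pos : 0 < gamma) (xi_pos : 0 < xi) (eta_pos : 0 < eta)
  (D_pos : 0 < D) (Rd_pos : 0 < Rd).

Local Notation C := (Cbar gamma xi eta D Rd).

Let scale_pos : 0 < gamma * xi * Rd ^ 2 / (8 * D ^ 2).
Proof.
  assert (0 < Rd ^ 2) by (apply pow_lt; lra). assert (0 < D ^ 2) by (apply pow_lt; lra).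
  assert (0 < gamma * xi) by nra.
  apply Rdiv_lt_0_compat; nra.
Qed.

Lemma Cbar_nonpos z : z <= 0 -> C z = 0.
Proof. intros Hz. unfold Cbar. destruct (Rlt_dec 0 z); [lra | reflexivity]. Qed.

Lemma Cbar_factor z : 0 < z ->
  z ^ 2 * C z = gamma * xi * Rd ^ 2 / (8 * D ^ 2) * exp (- (Rd ^ 2 / (4 * D) / z)) * exp (- (eta * z)).
Proof.
  intros Hz. unfold Cbar. destruct (Rlt_dec 0 z) as [_|]; [|lra].
  rewrite (Rmult_assoc _ (exp _)), <- exp_plus.
  replace (- (Rd ^ 2 / (4 * D) / z) + - (eta * z)) with (- Rd ^ 2 / (4 * z * D) - eta * z)
    by (field; lra).
  field; lra.
Qed.

Lemma Cbar_pos z : 0 < z -> 0 < C z.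
Proof.
  intros Hz.
  assert (Hz2 : 0 < z ^ 2) by (apply pow_lt; lra).
  assert (Hprod : 0 < z ^ 2 * C z).
  { rewrite Cbar_factor by exact Hz.
    pose proof (exp_pos (- (Rd ^ 2 / (4 * D) / z))). pose proof (exp_pos (- (eta * z))).
    apply Rmult_lt_0_compat; [apply Rmult_lt_0_compat|]; lra. }
  nra.
Qed.

Lemma Cbar_nonneg z : 0 <= C z.
Proof.
  destruct (Rlt_le_dec 0 z) as [Hz|Hz].
  - left. apply Cbar_pos, Hz.
  - rewrite Cbar_nonpos by exact Hz. lra.
Qed.

Lemma Cbar_mul_pow_le (n : nat) z : 0 < z ->
  z ^ 2 * C z <= gamma * xi * Rd ^ 2 / (8 * D ^ 2) * INR (Factorial.fact n)
                 * (4 * D * z / Rd ^ 2) ^ n * exp (- (eta * z)).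
Proof.
  intros Hz. rewrite Cbar_factor by exact Hz.
  assert (Ha : 0 < Rd ^ 2 / (4 * D)) by (apply Rdiv_lt_0_compat; [apply pow_lt|]; lra).
  pose proof (exp_neg_div_le n _ _ Ha Hz) as Hexp.
  replace (z / (Rd ^ 2 / (4 * D))) with (4 * D * z / Rd ^ 2) in Hexp
    by (field; lra).
  pose proof (exp_pos (- (eta * z))).
  rewrite (Rmult_assoc _ (INR _)).
  apply Rmult_le_compat_r; [lra|]. apply Rmult_le_compat_l; lra.
Qed.

Lemma Cbar_le_exp z : 0 < z -> C z <= 4 * gamma * xi / Rd ^ 2 * exp (- (eta * z)).
Proof.
  intros Hz. pose proof (Cbar_mul_pow_le 2 z Hz) as H2.
  replace (gamma * xi * Rd ^ 2 / (8 * D ^ 2) * INR (Factorial.fact 2) * (4 * D * z / Rd ^ 2) ^ 2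
           * exp (- (eta * z)))
    with (z ^ 2 * (4 * gamma * xi / Rd ^ 2 * exp (- (eta * z)))) in H2
    by (simpl; field; split; lra).
  apply Rmult_le_reg_l with (z ^ 2); [apply pow_lt; lra | exact H2].
Qed.

Lemma Cbar_le_linear z : 0 < z -> C z <= 48 * gamma * xi * D / Rd ^ 4 * z.
Proof.
  intros Hz. pose proof (Cbar_mul_pow_le 3 z Hz) as H3.
  replace (gamma * xi * Rd ^ 2 / (8 * D ^ 2) * INR (Factorial.fact 3) * (4 * D * z / Rd ^ 2) ^ 3
           * exp (- (eta * z)))
    with (z ^ 2 * (48 * gamma * xi * D / Rd ^ 4 * z * exp (- (eta * z)))) in H3
    by (simpl; field; split; lra).
  apply Rmult_le_reg_l in H3; [|apply pow_lt; lra].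
  assert (Hexp : exp (- (eta * z)) <= 1).
  { rewrite <- exp_0. left. apply exp_increasing. nra. }
  assert (0 <= 48 * gamma * xi * D / Rd ^ 4 * z).
  { assert (0 < Rd ^ 4) by (apply pow_lt; lra).
    assert (0 < gamma * xi * D) by (apply Rmult_lt_0_compat; nra).
    apply Rmult_le_pos; [apply Rdiv_le_0_compat|]; lra. }
  nra.
Qed.

Lemma Cbar_continuous z : continuous C z.
Proof.
  destruct (Rlt_le_dec 0 z) as [Hz|Hz]; [|destruct (Rle_lt_or_eq_dec _ _ Hz) as [Hz' | ->]].
  - apply continuous_ext_loc with
      (fun y => gamma * xi * Rd ^ 2 * exp (- Rd ^ 2 / (4 * y * D) - eta * y) / (8 * y ^ 2 * D ^ 2)).
    + apply (filter_imp (fun y => 0 < y)); [|exact (open_gt 0 z Hz)].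
      intros y Hy. unfold Cbar. destruct (Rlt_dec 0 y); [reflexivity | lra].
    + apply (ex_derive_continuous (K := R_AbsRing) (V := R_NormedModule)).
      auto_derive. repeat split; apply Rgt_not_eq; repeat apply Rmult_lt_0_compat; lra.
  - apply continuous_ext_loc with (fun _ => 0); [|apply continuous_const].
    apply (filter_imp (fun y => y < 0)); [|exact (open_lt 0 z Hz')].
    intros y Hy. symmetry. apply Cbar_nonpos. lra.
  - apply continuous_at_0_of_linear_bound with (48 * gamma * xi * D / Rd ^ 4).
    + apply Cbar_nonpos. lra.
    + intros z. rewrite Rabs_pos_eq by apply Cbar_nonneg.
      destruct (Rlt_le_dec 0 z) as [Hz0|Hz0].
      * rewrite Rabs_pos_eq by lra. apply Cbar_le_linear, Hz0.
      * rewrite Cbar_nonpos by exact Hz0.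
        assert (0 < Rd ^ 4) by (apply pow_lt; lra).
        assert (0 < gamma * xi * D) by (apply Rmult_lt_0_compat; nra).
        apply Rmult_le_pos; [apply Rdiv_le_0_compat | apply Rabs_pos]; lra.
Qed.

Lemma ex_RInt_Cbar a b : ex_RInt C a b.
Proof.
  apply (ex_RInt_continuous (V := R_CompleteNormedModule)).
  intros z _. apply Cbar_continuous.
Qed.

Lemma gfun_RInt (N : nat) t : gfun N gamma xi eta D Rd t = INR N * RInt C 0 t.
Proof.
  unfold gfun. f_equal.
  pose proof (RInt_comp_lin C (-1) t 0 t) as Hlin.
  replace (-1 * 0 + t) with t in Hlin by ring. replace (-1 * t + t) with 0 in Hlin by ring.
  rewrite <- (opp_RInt_swap C t 0), <- Hlin by apply ex_RInt_Cbar.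
  rewrite <- RInt_opp.
  - apply RInt_ext. intros x _.
    replace (-1 * x + t) with (t - x) by ring.
    change (C (t - x) = - (-1 * C (t - x))). ring.
  - apply (ex_RInt_comp_lin C (-1) t 0 t).
    replace (-1 * 0 + t) with t by ring. replace (-1 * t + t) with 0 by ring.
    apply ex_RInt_Cbar.
Qed.

Lemma is_derive_gfun (N : nat) t : is_derive (gfun N gamma xi eta D Rd) t (INR N * C t).
Proof.
  apply is_derive_ext with (fun s => INR N * RInt C 0 s); [intros s; symmetry; apply gfun_RInt|].
  apply is_derive_scal.
  apply (is_derive_RInt (V := R_NormedModule) C (RInt C 0) 0).
  - apply filter_forall. intros b.
    apply (RInt_correct (V := R_CompleteNormedModule)), ex_RInt_Cbar.
  - apply Cbar_continuous.
Qed.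

Lemma RInt_Cbar_le t : 0 <= t -> RInt C 0 t <= 4 * gamma * xi / Rd ^ 2 / eta.
Proof.
  intros Ht.
  set (M := 4 * gamma * xi / Rd ^ 2).
  assert (HM : 0 < M) by (unfold M; apply Rdiv_lt_0_compat; [nra | apply pow_lt; lra]).
  assert (Hdecay : is_RInt (fun s => M * exp (- (eta * s))) 0 t
                     (minus (- M / eta * exp (- (eta * t))) (- M / eta * exp (- (eta * 0))))).
  { apply (is_RInt_derive (V := R_CompleteNormedModule) (fun s => - M / eta * exp (- (eta * s)))).
    - intros x _. auto_derive; [exact I | field; lra].
    - intros x _. apply (ex_derive_continuous (K := R_AbsRing) (V := R_NormedModule)).
      auto_derive. exact I. }
  apply Rle_trans with (RInt (fun s => M * exp (- (eta * s))) 0 t).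
  - apply RInt_le; [exact Ht | apply ex_RInt_Cbar | eexists; exact Hdecay |].
    intros x Hx. apply Cbar_le_exp. lra.
  - rewrite (is_RInt_unique _ _ _ _ Hdecay).
    unfold minus, plus, opp; simpl.
    rewrite Rmult_0_r, Ropp_0, exp_0.
    pose proof (exp_pos (- (eta * t))).
    assert (0 < M / eta) by (apply Rdiv_lt_0_compat; lra).
    unfold Rdiv in *. nra.
Qed.

Lemma RInt_Cbar_pos t : 0 < t -> 0 < RInt C 0 t.
Proof.
  intros Ht. apply RInt_gt_0; [exact Ht | |].
  - intros x Hx. apply Cbar_pos. lra.
  - intros x _. apply Cbar_continuous.
Qed.

Lemma RInt_Cbar_monotone s t : s <= t -> RInt C 0 s <= RInt C 0 t.
Proof.
  intros Hst.
  rewrite <- (RInt_Chasles C 0 s t) by apply ex_RInt_Cbar.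
  assert (0 <= RInt C s t).
  { apply RInt_ge_0; [exact Hst | apply ex_RInt_Cbar |]. intros x _. apply Cbar_nonneg. }
  unfold plus; simpl. lra.
Qed.

End Kernel.

Theorem theorem5p1 (N : nat) (beta gamma xi eta D Rd : R) :
  (1 <= N)%nat -> 0 < beta -> 0 < gamma -> 0 < xi -> 0 < eta -> 0 < D -> 0 < Rd ->
  forall tbar : R, 0 < tbar ->
  exists (U Ut UV UX : R -> R -> R -> R) (k1 k2 k3 : R),
    0 < k1 /\ 0 < k2 /\ 0 < k3 /\
    (forall t V X, tbar <= t ->
       is_derive (fun s => U s V X) t (Ut t V X) /\
       is_derive (fun v => U t v X) V (UV t V X) /\
       is_derive (fun x => U t V x) X (UX t V X)) /\
    (forall t V X, tbar <= t ->
       k2 * (V ^ 2 + X ^ 2) <= U t V X <= k1 * (V ^ 2 + X ^ 2)) /\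
    (forall t V X, tbar <= t ->
       Ut t V X + UV t V X * (- beta * V - gfun N gamma xi eta D Rd t * X)
         + UX t V X * V <= - k3 * (V ^ 2 + X ^ 2)).
Proof.
  intros HN Hbeta Hgamma Hxi Heta HD HRd tbar Htbar.
  assert (HN1 : 1 <= INR N) by exact (le_INR 1 N HN).
  assert (0 < RInt (Cbar gamma xi eta D Rd) 0 tbar) by (apply RInt_Cbar_pos; assumption).
  apply (planar_has_strict_lyapunov beta tbar
           (INR N * RInt (Cbar gamma xi eta D Rd) 0 tbar)
           (INR N * (4 * gamma * xi / Rd ^ 2 / eta))
           (gfun N gamma xi eta D Rd) (fun t => INR N * Cbar gamma xi eta D Rd t));
    [exact Hbeta | nra | | |]; intros t Ht.
  - apply is_derive_gfun; assumption.
  - apply Rmult_le_pos; [lra | apply Cbar_nonneg; assumption].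
  - rewrite gfun_RInt by assumption.
    split; apply Rmult_le_compat_l; try lra.
    + apply RInt_Cbar_monotone; assumption.
    + apply RInt_Cbar_le; try assumption. lra.
Qed.
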